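(* Let $\mathcal I$ be the poset of open connected intervals of $S^1$ whose closure is properly contained in $S^1$, ordered by inclusion. Every $\mathrm{C}^*$-net bundle $(\mathcal A,\jmath)_{\mathcal I}$ over $\mathcal I$ whose Čech cocycle is globally defined is trivial.
   Context: A $\mathrm{C}^*$-net bundle $(\mathcal A,\jmath)_K$ over a poset $K$: unital $\mathrm{C}^*$-algebras $\mathcal A_o$ ($o\in K$) and ${}^*$-isomorphisms $\jmath_{oa}:\mathcal A_a\to\mathcal A_o$ ($a\le o$) with $\jmath_{oa}\circ\jmath_{ae}=\jmath_{oe}$. It is trivial if there are ${}^*$-isomorphisms $\phi_o:\mathcal A_o\to\mathrm A$ onto a fixed $\mathrm{C}^*$-algebra with $\phi_o\circ\jmath_{oa}=\phi_a$ for all $a\le o$ (isomorphism with the constant net bundle). For nonempty $F\subseteq K$ and $o,\tilde o\in K$ with every element of $F$ below both $o$ and $\tilde o$, $(F;\tilde o,o)$ is a $1$-simplex of the simplicial set $\Sigma^\circ_*(K)$ (whose $n$-simplices are strings $(F;o_{n+1},\dots,o_1)$ with $F$ nonempty and every element of $F$ below every $o_i$). $\mathcal A^F_o$ is the $\mathrm{C}^*$-subalgebra of $\mathcal A_o$ generated by the $\jmath_{oa}(\mathcal A_a)$, $a\in F$. The Čech cocycle is defined on $(F;\tilde o,o)$ if there is a ${}^*$-isomorphism $\zeta^F_{\tilde oo}:\mathcal A^F_o\to\mathcal A^F_{\tilde o}$ with $\zeta^F_{\tilde oo}\circ\jmath_{oa}=\jmath_{\tilde oa}$ for all $a\in F$;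 it is globally defined if it is defined on every $1$-simplex of $\Sigma^\circ_*(K)$ (i.e. its domain is all of $\Sigma^\circ_*(K)$). *)

From HB Require Import structures.
From mathcomp Require Import all_boot all_order all_algebra.
From mathcomp Require Import all_classical all_reals all_analysis.
From mathcomp Require Import complex.
Set Implicit Arguments. Unset Strict Implicit. Unset Printing Implicit Defensive.
Import Order.TTheory GRing.Theory Num.Theory.
Local Open Scope ring_scope.
Local Open Scope classical_set_scope.

Record cstar_algebra (R : realType) := CstarAlgebra {
  ca_sort :> completeNormedModType R[i];
  ca_one : ca_sort;
  ca_mul : ca_sort -> ca_sort -> ca_sort;
  ca_star : ca_sort -> ca_sort;
  ca_mulA : associative ca_mul;
  ca_mul1l : left_id ca_one ca_mul;
  ca_mul1r : right_id ca_one ca_mul;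
  ca_mulDl : forall x y z, ca_mul (x + y) z = ca_mul x z + ca_mul y z;
  ca_mulDr : forall x y z, ca_mul x (y + z) = ca_mul x y + ca_mul x z;
  ca_mulZl : forall (c : R[i]) x y, ca_mul (c *: x) y = c *: ca_mul x y;
  ca_mulZr : forall (c : R[i]) x y, ca_mul x (c *: y) = c *: ca_mul x y;
  ca_starK : involutive ca_star;
  ca_starD : forall x y, ca_star (x + y) = ca_star x + ca_star y;
  ca_starZ : forall (c : R[i]) x, ca_star (c *: x) = c^* *: ca_star x;
  ca_starM : forall x y, ca_star (ca_mul x y) = ca_mul (ca_star y) (ca_star x);
  ca_normM : forall x y, `|ca_mul x y| <= `|x| * `|y|;
  ca_cstar : forall x, `|ca_mul (ca_star x) x| = `|x| ^+ 2
}.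

Section CStar.
Variable R : realType.

Definition star_hom (A B : cstar_algebra R) (f : A -> B) :=
  [/\ forall x y, f (x + y) = f x + f y,
      forall (c : R[i]) x, f (c *: x) = c *: f x,
      forall x y, f (ca_mul x y) = ca_mul (f x) (f y) &
      forall x, f (ca_star x) = ca_star (f x)].

Definition star_iso (A B : cstar_algebra R) (f : A -> B) :=
  star_hom f /\ bijective f.

Definition star_iso_on (A B : cstar_algebra R) (S : set A) (T : set B)
    (f : A -> B) :=
  [/\ set_bij S T f,
      forall x y, S x -> S y -> f (x + y) = f x + f y,
      forall (c : R[i]) x, S x -> f (c *: x) = c *: f x,
      forall x y, S x -> S y -> f (ca_mul x y) = ca_mul (f x) (f y) &
      forall x, S x -> f (ca_star x) = ca_star (f x)].

Definition cstar_subalg (A : cstar_algebra R) (S : set A) :=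
  [/\ S 0 /\ forall x y, S x -> S y -> S (x + y),
      forall (c : R[i]) x, S x -> S (c *: x),
      forall x y, S x -> S y -> S (ca_mul x y),
      forall x, S x -> S (ca_star x) &
      closed S].

Definition gen_cstar (A : cstar_algebra R) (X : set A) : set A :=
  \bigcap_(S in [set S : set A | cstar_subalg S /\ X `<=` S]) S.

(* nb_j o a is the *-isomorphism j_{oa} : A_a -> A_o; it is only        *)
(* constrained when le a o.                                            *)
Unset Implicit Arguments.
Record net_bundle (K : Type) (le : K -> K -> Prop) := NetBundle {
  nb_alg : K -> cstar_algebra R;
  nb_j : forall o a : K, nb_alg a -> nb_alg o;
  nb_j_iso : forall o a, le a o -> star_iso (nb_j o a);
  nb_j_comp : forall o a e, le e a -> le a o ->
      forall x, nb_j o a (nb_j a e x) = nb_j o e x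
}.
Set Implicit Arguments.
Arguments net_bundle {K} le.
Arguments nb_alg {K le} _ _.
Arguments nb_j {K le} _ _ _ _.

Variables (K : Type) (le : K -> K -> Prop).

(* triviality: isomorphic to a constant net bundle *)
Definition trivial_bundle (N : net_bundle le) :=
  exists (A0 : cstar_algebra R) (phi : forall o, nb_alg N o -> A0),
    (forall o, star_iso (phi o)) /\
    (forall o a, le a o -> forall x, phi o (nb_j N o a x) = phi a x).

Definition one_simplex (F : set K) (ot o : K) :=
  F !=set0 /\ (forall a, F a -> le a o /\ le a ot).

Definition net_sub (N : net_bundle le) (F : set K) (o : K) : set (nb_alg N o) :=
  gen_cstar [set y | exists a, F a /\ exists x, y = nb_j N o a x].
Arguments net_sub : clear implicits.

Definition cocycle_defined (N : net_bundle le) (F : set K) (ot o : K) :=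
  exists zeta : nb_alg N o -> nb_alg N ot,
    star_iso_on (net_sub N F o) (net_sub N F ot) zeta /\
    (forall a, F a -> forall x, zeta (nb_j N o a x) = nb_j N ot a x).

Definition cocycle_globally_defined (N : net_bundle le) :=
  forall F ot o, one_simplex F ot o -> cocycle_defined N F ot o.

End CStar.

Arguments net_bundle R {K} le.
Arguments nb_alg {R K le} n o.
Arguments nb_j {R K le} n o a _.
Arguments net_sub {R K le} N F o _.

(* The poset I of open intervals of S^1 (S^1 in R^2) whose closure is   *)
(* properly contained in S^1: the open arcs {(cos t, sin t) | a<t<a+l}  *)
(* with 0 < l < 2 pi, ordered by inclusion.                            *)
Definition S1arc (R : realType) (a l : R) : set (R * R) :=
  [set (cos t, sin t) | t in `]a, a + l[].

Definition is_S1interval (R : realType) (I : set (R * R)) :=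
  exists a l : R, 0 < l < 2 * pi /\ I = S1arc a l.

Definition S1interval (R : realType) := {I : set (R * R) | is_S1interval I}.

Definition S1interval_le (R : realType) (I J : S1interval R) : Prop :=
  proj1_sig I `<=` proj1_sig J.

From HB Require Import structures.
From mathcomp Require Import all_boot all_order all_algebra.
From mathcomp Require Import all_classical all_reals all_analysis.
From mathcomp Require Import complex.
From mathcomp Require Import lra.
Set Implicit Arguments. Unset Strict Implicit. Unset Printing Implicit Defensive.
Import Order.TTheory GRing.Theory Num.Theory.
Local Open Scope ring_scope.
Local Open Scope classical_set_scope.

(* For intervals x, y below a common u, the transport j_{uy}^-1 j_{ux} from
   A_x to A_y does not depend on u: the cocycle on ({x, y}; v, u) intertwines
   the embeddings into A_u and A_v. Fix the quadrants r1 = (0, pi/2) and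
   r2 = (pi, 3pi/2). A proper interval of S^1 either contains one of them or
   lies, together with both, in a proper interval; so an interval sharing no
   upper bound with r1 contains r2. Transporting every A_c to A_r1, directly
   or through A_r2, is then compatible with the j's and trivialises the
   bundle. *)

Section StarIso.
Variable R : realType.
Implicit Types A B C : cstar_algebra R.

Definition iso_inv A B (f : A -> B) : B -> A := 'pinv_(fun=> 0) setT f.

Lemma iso_invK A B (f : A -> B) : bijective f -> cancel (iso_inv f) f.
Proof. by case=> g fK gK y; apply: pinvK; apply/mem_set; exists (g y). Qed.

Lemma iso_invKV A B (f : A -> B) : bijective f -> cancel f (iso_inv f).
Proof.
move=> /bij_inj fI x; apply: pinvKV; last exact: mem_set.
by move=> ? ? _ _; apply: fI.
Qed.

Lemma star_iso_comp A B C (f : A -> B) (g : B -> C) :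
  star_iso f -> star_iso g -> star_iso (g \o f).
Proof.
move=> [[f1 f2 f3 f4] fb] [[g1 g2 g3 g4] gb]; split; last exact: bij_comp.
by split=> *; rewrite /= ?f1 ?f2 ?f3 ?f4 ?g1 ?g2 ?g3 ?g4.
Qed.

Lemma star_iso_inv A B (f : A -> B) : star_iso f -> star_iso (iso_inv f).
Proof.
move=> [[f1 f2 f3 f4] fb]; have fK := iso_invK fb; have fI := bij_inj fb.
split; last by exists f => //; apply: iso_invKV.
by split=> *; apply: fI; rewrite ?f1 ?f2 ?f3 ?f4 !fK.
Qed.

End StarIso.

Section Transport.
Variables (R : realType) (K : Type) (le : K -> K -> Prop).
Hypothesis le_refl : forall x, le x x.
Variable N : net_bundle R le.
Hypothesis cocycleN : cocycle_globally_defined N.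

Local Notation j := (nb_j N).

Lemma j_bij (o a : K) : le a o -> bijective (j o a).
Proof. by case/(nb_j_iso _ _ _ N). Qed.

Definition common_ub (x y : K) := exists u, le x u /\ le y u.

Definition transport_via (u x y : K) : nb_alg N x -> nb_alg N y :=
  iso_inv (j u y) \o j u x.
Arguments transport_via : clear implicits.

Lemma transport_via_indep (x y u v : K) :
  le x u -> le y u -> le x v -> le y v -> transport_via u x y =1 transport_via v x y.
Proof.
move=> xu yu xv yv z.
have [|zeta [_ zetaj]] := cocycleN (F := [set x; y]) (ot := v) (o := u).
  by split=> [|a [->|->]]; [exists x; left|..].
have jw : j u y (transport_via u x y z) = j u x z by apply/iso_invK/j_bij.
have := congr1 zeta jw; rewrite !zetaj; [move=> jvw|by left|by right].
by rewrite [RHS]/transport_via /= -jvw iso_invKV //; apply: j_bij.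
Qed.

Definition transport (x y : K) : nb_alg N x -> nb_alg N y :=
  if pselect (common_ub x y) is left h then transport_via (sval (cid h)) x y
  else fun=> 0.
Arguments transport : clear implicits.

Lemma transportE (x y u : K) : le x u -> le y u -> transport x y =1 transport_via u x y.
Proof.
move=> xu yu z; rewrite /transport; case: pselect => [h|[]]; last by exists u.
by case: cid => w [xw yw] /=; apply: transport_via_indep.
Qed.

Lemma transport_j (a o : K) : le a o -> transport a o =1 j o a.
Proof.
move=> ao z; rewrite (transportE ao (le_refl o)) /transport_via /=.
rewrite -{1}(nb_j_comp _ _ _ N _ _ _ ao (le_refl o) z) iso_invKV //.
exact: j_bij.
Qed.

Lemma transport_comp (x y z u : K) : le x u -> le y u -> le z u ->
  forall w, transport y z (transport x y w) = transport x z w.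
Proof.
move=> xu yu zu w; rewrite (transportE yu zu) (transportE xu yu) (transportE xu zu).
by rewrite /transport_via /= iso_invK //; apply: j_bij.
Qed.

Lemma transport_iso (x y : K) : common_ub x y -> star_iso (transport x y).
Proof.
move=> [u [xu yu]]; rewrite (funext (transportE xu yu)).
by apply: star_iso_comp; [|apply: star_iso_inv]; apply: nb_j_iso.
Qed.

Hypothesis le_trans : forall x y z, le x y -> le y z -> le x z.
Variables r1 r2 : K.
Hypothesis anchors_ub : common_ub r1 r2.
Hypothesis anchors_cover :
  forall c, (exists u, [/\ le c u, le r1 u & le r2 u]) \/ le r1 c \/ le r2 c.

Lemma anchor2_le_of_not_ub (c : K) : ~ common_ub c r1 -> le r2 c.
Proof.
move=> cr1; have [[u [cu r1u _]]|[r1c|//]] := anchors_cover c.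
  by case: cr1; exists u.
by case: cr1; exists c.
Qed.

Definition to_anchor (c : K) : nb_alg N c -> nb_alg N r1 :=
  if pselect (common_ub c r1) then transport c r1
  else transport r2 r1 \o transport c r2.
Arguments to_anchor : clear implicits.

Lemma to_anchor_iso (c : K) : star_iso (to_anchor c).
Proof.
rewrite /to_anchor; case: pselect => [|nc1]; first exact: transport_iso.
apply: star_iso_comp; apply: transport_iso.
  by exists c; split=> //; apply: anchor2_le_of_not_ub.
by have [u [r1u r2u]] := anchors_ub; exists u.
Qed.

Lemma to_anchor_j (o a : K) : le a o ->
  forall x, to_anchor o (j o a x) = to_anchor a x.
Proof.
move=> ao x; rewrite -(transport_j ao) /to_anchor.
case: (pselect (common_ub o r1)) => [[u [ou r1u]]|no1]; case: pselect => [a1|na1].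
- exact: (transport_comp (le_trans ao ou) ou r1u).
- by case: na1; exists u; split=> //; apply: le_trans ao ou.
- have r2o := anchor2_le_of_not_ub no1.
  have [v [av r1v r2v]] : exists v, [/\ le a v, le r1 v & le r2 v].
    have [//|[r1a|r2a]] := anchors_cover a.
      by case: no1; exists o; split=> //; apply: le_trans r1a ao.
    by case: a1 => u [au r1u]; exists u; split=> //; apply: le_trans r2a au.
  by rewrite /= (transport_comp ao (le_refl o) r2o) (transport_comp av r2v r1v).
- by rewrite /= (transport_comp ao (le_refl o) (anchor2_le_of_not_ub no1)).
Qed.

Theorem trivial_bundle_of_anchors : trivial_bundle N.
Proof.
by exists (nb_alg N r1), to_anchor; split; [apply: to_anchor_iso|apply: to_anchor_j].
Qed.

End Transport.

Lemma periodicz (U V : zmodType) (f : U -> V) (T : U) :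
  periodic f T -> forall (k : int) a, f (a + T *~ k) = f a.
Proof.
move=> fT [n|n] a; first exact: periodicn.
by rewrite NegzE mulrNz -(periodicn fT n.+1 (a - T *+ n.+1)) subrK.
Qed.

Lemma exists_shift_into_period (R : archiRealFieldType) (T x a : R) : 0 < T ->
  exists k : int, x <= a + T *~ k < x + T.
Proof.
move=> T0; set k := Num.floor ((a - x) / T).
have := floor_le ((a - x) / T); have := floorD1_gt ((a - x) / T).
rewrite -/k intrD ltr_pdivrMr // ler_pdivlMr // => hk1 hk0.
exists (- k); rewrite mulrNz -mulrzr; apply/andP; split; lra.
Qed.

Section Circle.
Variable R : realType.

Lemma S1arc_le (a l b m : R) : b <= a -> a + l <= b + m ->
  S1arc a l `<=` S1arc b m.
Proof.
move=> ba alb _ [t + <-]; rewrite /= in_itv /= => /andP[at0 tl].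
by exists t => //; rewrite /= in_itv /=; apply/andP; split; lra.
Qed.

Lemma S1arc_shift (a l : R) (k : int) : S1arc (a + 2 * pi *~ k) l = S1arc a l.
Proof.
have per (s : int) (t : R) : (cos (t + 2 * pi *~ s), sin (t + 2 * pi *~ s)) = (cos t, sin t).
  by rewrite mulr_natl (periodicz (@cosD2pi R)) (periodicz (@sinD2pi R)).
rewrite eqEsubset; split=> _ [t + <-]; rewrite /= in_itv /= => /andP[t1 t2].
- rewrite -(per (- k)); exists (t + 2 * pi *~ - k) => //=.
  by rewrite in_itv /= mulrNz; apply/andP; split; lra.
- rewrite -(per k); exists (t + 2 * pi *~ k) => //=.
  by rewrite in_itv /=; apply/andP; split; lra.
Qed.

Lemma S1arc_hull (x a l c n : R) : 0 < l < 2 * pi ->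
  x <= a -> a + l <= x + 2 * pi -> x < c -> c + n < x + 2 * pi ->
  exists b m, 0 < m < 2 * pi /\ S1arc a l `<=` S1arc b m /\ S1arc c n `<=` S1arc b m.
Proof.
move=> /andP[l0 l2] xa alx xc cnx.
have hull b m : b <= a -> b <= c -> a + l <= b + m -> c + n <= b + m ->
    0 < m < 2 * pi ->
    exists b m, 0 < m < 2 * pi /\ S1arc a l `<=` S1arc b m /\ S1arc c n `<=` S1arc b m.
  by move=> ba bc ab cb hm; exists b, m; split=> //; split; apply: S1arc_le.
case: (lerP a c) => ac; case: (lerP (a + l) (c + n)) => alcn.
- by apply: (hull a (c + n - a)) => //; try lra; apply/andP; split; lra.
- by apply: (hull a l) => //; try lra; apply/andP; split; lra.
- by apply: (hull c (c + n - c)) => //; try lra; apply/andP; split; lra.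
- by apply: (hull c (a + l - c)) => //; try lra; apply/andP; split; lra.
Qed.

Lemma S1arc_quadrant_cases (a l : R) : 0 < l < 2 * pi ->
  (exists b m, 0 < m < 2 * pi /\ [/\ S1arc a l `<=` S1arc b m,
     S1arc 0 (pi / 2) `<=` S1arc b m & S1arc pi (pi / 2) `<=` S1arc b m])
  \/ S1arc 0 (pi / 2) `<=` S1arc a l \/ S1arc pi (pi / 2) `<=` S1arc a l.
Proof.
move=> /andP[l0 l2]; have p0 := @pi_gt0 R.
(* Lift the arc so that it starts in [3pi/4, 3pi/4 + 2pi): 3pi/4 lies in the
   gap between the quadrants. *)
have [k /andP[k1 k2]] : exists k : int,
    3 * pi / 4 <= a + 2 * pi *~ k < 3 * pi / 4 + 2 * pi.
  by apply: exists_shift_into_period; lra.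
rewrite -(S1arc_shift a l k); move: (a + _) k1 k2 => {}a k1 k2.
have r1E : S1arc 0 (pi / 2) = S1arc (2 * pi) (pi / 2) :> set (R * R).
  by rewrite -(S1arc_shift 0 _ 1) add0r mulr1z.
have r2E : S1arc pi (pi / 2) = S1arc (3 * pi) (pi / 2) :> set (R * R).
  by rewrite -(S1arc_shift pi _ 1) mulr1z; congr S1arc; lra.
have l2' : 0 < l < 2 * pi by apply/andP.
case: (lerP (a + l) (11 * pi / 4)) => c1.
  have [||||b [m [hm [sa sc]]]] := @S1arc_hull (3 * pi / 4) a l pi (3 * pi / 2) l2';
    try lra.
  left; exists b, m; split=> //; split=> //; apply: subset_trans sc.
    by rewrite r1E; apply: S1arc_le; lra.
  by apply: S1arc_le; lra.
case: (ltrP a (7 * pi / 4)) => c2.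
  by right; left; rewrite r1E; apply: S1arc_le; lra.
case: (ltrP (15 * pi / 4) (a + l)) => c3.
  by right; right; rewrite r2E; apply: S1arc_le; lra.
have [||||b [m [hm [sa sc]]]] :=
    @S1arc_hull (7 * pi / 4) a l (2 * pi) (3 * pi / 2) l2'; try lra.
left; exists b, m; split=> //; split=> //; apply: subset_trans sc.
  by rewrite r1E; apply: S1arc_le; lra.
by rewrite r2E; apply: S1arc_le; lra.
Qed.

Lemma S1arc_is_interval (a l : R) : 0 < l < 2 * pi -> is_S1interval (S1arc a l).
Proof. by move=> hl; exists a, l. Qed.

Definition S1arc_interval (a l : R) (hl : 0 < l < 2 * pi) : S1interval R :=
  exist (@is_S1interval R) (S1arc a l) (S1arc_is_interval a hl).

Lemma quadrant_length : 0 < (pi : R) / 2 < 2 * pi.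
Proof. by have p0 := @pi_gt0 R; apply/andP; split; lra. Qed.

Definition quadrant1 := S1arc_interval 0 quadrant_length.
Definition quadrant3 := S1arc_interval pi quadrant_length.

Lemma S1interval_quadrant_cases (c : S1interval R) :
  (exists u, [/\ S1interval_le c u, S1interval_le quadrant1 u
              & S1interval_le quadrant3 u])
  \/ S1interval_le quadrant1 c \/ S1interval_le quadrant3 c.
Proof.
case: c => I hI; rewrite /S1interval_le /=; case: hI => a [l [hl ->]].
have [[b [m [hm [sa s1 s3]]]]|[s1|s3]] := S1arc_quadrant_cases a hl.
- by left; exists (S1arc_interval b hm).
- by right; left.
- by right; right.
Qed.

Lemma quadrants_common_ub : common_ub (@S1interval_le R) quadrant1 quadrant3.
Proof.
have p0 := @pi_gt0 R.
have hm : 0 < 3 * (pi : R) / 2 < 2 * pi by apply/andP; split; lra.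
by exists (S1arc_interval 0 hm); split; apply: S1arc_le; lra.
Qed.

End Circle.

Theorem lemma5p11 (R : realType)
    (N : net_bundle R (@S1interval_le R)) :
  cocycle_globally_defined N -> trivial_bundle N.
Proof.
move=> cocycleN.
apply: (trivial_bundle_of_anchors _ cocycleN _ (@quadrants_common_ub R)).
- by move=> c ?.
- by move=> c d e cd de; apply: subset_trans de.
- exact: S1interval_quadrant_cases.
Qed.
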